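(* A downward-closed set system $\mathcal{S}=(E,\mathcal{I})$ is not a matroid if and only if there exist $I,J\in\mathcal{I}$ with the following three properties: (1) for every $K\in\mathcal{I}|_{I\cup J}$ with $|K|\ge|I|$ we have $K\supseteq I\setminus J$; (2) $|J\setminus I|\ge 1$; (3) $I$ is a maximum-cardinality element of $\mathcal{I}|_{I\cup J}$.
   Context: A set system $(E,\mathcal{I})$ consists of a finite set $E$ and $\mathcal{I}\subseteq 2^E$ with $\emptyset\in\mathcal{I}$. It is downward-closed if $B\in\mathcal{I}$ and $A\subseteq B$ imply $A\in\mathcal{I}$. It is a matroid if it is downward-closed and satisfies the exchange axiom: if $A,B\in\mathcal{I}$ and $|A|>|B|$ then there exists $x\in A\setminus B$ with $B\cup\{x\}\in\mathcal{I}$. For $S\subseteq E$, $\mathcal{I}|_S=\mathcal{I}\cap 2^S$. *)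

From mathcomp Require Import all_boot.
Set Implicit Arguments. Unset Strict Implicit. Unset Printing Implicit Defensive.

(* A set system on the finite ground set E = T (a finType), with family
   II : {set {set T}} of "independent" sets, containing the empty set. *)
Definition set_system (T : finType) (II : {set {set T}}) : Prop := set0 \in II.

Definition downward_closed (T : finType) (II : {set {set T}}) : Prop :=
  forall A B : {set T}, B \in II -> A \subset B -> A \in II.

Definition exchange_axiom (T : finType) (II : {set {set T}}) : Prop :=
  forall A B : {set T}, A \in II -> B \in II -> #|B| < #|A| ->
    exists2 x, x \in A :\: B & B :|: [set x] \in II.

Definition is_matroid (T : finType) (II : {set {set T}}) : Prop :=
  downward_closed II /\ exchange_axiom II.

Definition restrict (T : finType) (II : {set {set T}}) (S : {set T}) : {set {set T}} :=
  [set K in II | K \subset S].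

From mathcomp Require Import all_boot.

Set Implicit Arguments.
Unset Strict Implicit.
Unset Printing Implicit Defensive.

(* - Certificate => not a matroid.  In a matroid, J can be augmented inside
     I ∪ J to an independent K ⊇ J with |K| ≥ |I| (augmentation lemma).  The
     certificate forces I \ J ⊆ K, hence I ⊊ K, contradicting maximality of I.
   - Not a matroid => certificate.  A failure of the exchange axiom yields a
     "stuck" pair (I, J): I maximum in I ∪ J, |J| < |I|, and J cannot be
     augmented by any element of I \ J.  If a stuck pair is not already a
     certificate, a violating K is again maximum and (K, J) is a stuck pair
     whose union misses an element of I \ J; induction on |I ∪ J| concludes. *)

Section Certificates.

Variables (T : finType) (II : {set {set T}}).

Definition maximum_in (S I : {set T}) : Prop :=
  I \in restrict II S /\ forall K, K \in restrict II S -> #|K| <= #|I|.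

Definition certificate (I J : {set T}) : Prop :=
  [/\ I \in II, J \in II,
     (forall K, K \in restrict II (I :|: J) -> #|I| <= #|K| -> I :\: J \subset K),
     1 <= #|J :\: I| & maximum_in (I :|: J) I].

Definition stuck (I J : {set T}) : Prop :=
  [/\ maximum_in (I :|: J) I, J \in II, #|J| < #|I| &
      forall x, x \in I :\: J -> J :|: [set x] \notin II].

Lemma maximum_in_mem (S I : {set T}) : maximum_in S I -> I \in II.
Proof. by case; rewrite inE => /andP[]. Qed.

Lemma augment_within (S A B : {set T}) :
  exchange_axiom II -> A \in restrict II S -> B \in restrict II S ->
  exists2 K, K \in restrict II S & B \subset K /\ #|A| <= #|K|.
Proof.
move=> ex; rewrite !inE => /andP[AI AS] /andP[BI BS].
pose Q K := [&& K \in II, B \subset K & K \subset S].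
have QB : Q B by rewrite /Q BI subxx BS.
case: (arg_maxnP (fun K : {set T} => #|K|) QB) => K /and3P[KI BK KS] Kmax.
exists K; first by rewrite inE KI KS.
split=> //; rewrite leqNgt; apply/negP => ltKA.
have [x /setDP[xA xK] Kx] := ex A K AI KI ltKA.
have : #|K :|: [set x]| <= #|K|.
  apply: Kmax; rewrite /Q Kx (subset_trans BK (subsetUl _ _)) subUset KS.
  by rewrite sub1set (subsetP AS).
by rewrite setUC cardsU1 xK add1n ltnn.
Qed.

(* Certificates are incompatible with the exchange axiom: augmenting J
   inside I ∪ J yields an independent proper superset of I. *)
Lemma certificate_not_exchange (I J : {set T}) :
  exchange_axiom II -> certificate I J -> False.
Proof.
move=> ex [_ JI coverIJ nonempty [IR Imax]].
have JR : J \in restrict II (I :|: J) by rewrite inE JI subsetUr.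
have [K KR [JK leIK]] := augment_within ex IR JR.
have IK : I \subset K.
  apply/subsetP => z zI; case: (boolP (z \in J)) => zJ; first exact: (subsetP JK).
  by apply: (subsetP (coverIJ K KR leIK)); rewrite inE zJ.
have IltK : I \proper K.
  apply/properP; split=> //.
  have /card_gt0P[y /setDP[yJ yI]] := nonempty.
  by exists y => //; exact: (subsetP JK).
by move: (proper_card IltK); rewrite ltnNge Imax.
Qed.

(* Removing from I ∪ J an element y of I \ J missed by K ⊆ I ∪ J makes the
   union K ∪ J strictly smaller; this is the measure of the induction. *)
Lemma card_union_drop (I J K : {set T}) (y : T) :
  K \subset I :|: J -> y \in I :\: J -> y \notin K -> #|K :|: J| < #|I :|: J|.
Proof.
move=> KS /setDP[yI yJ] yK; apply: proper_card.
apply: (@sub_proper_trans _ _ ((I :|: J) :\ y)); last by apply: properD1; rewrite inE yI.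
apply/subsetP => z; rewrite in_setU in_setD1 => /orP[zK|zJ].
  by rewrite (subsetP KS z zK) andbT; apply: contraNneq yK => <-.
by rewrite in_setU zJ orbT andbT; apply: contraNneq yJ => <-.
Qed.

Lemma exchange_failure :
  ~ exchange_axiom II ->
  exists A B, [/\ A \in II, B \in II, #|B| < #|A| &
                  forall x, x \in A :\: B -> B :|: [set x] \notin II].
Proof.
move=> nex.
case: (boolP [exists A : {set T}, exists B : {set T},
   [&& A \in II, B \in II, #|B| < #|A| & [forall x in A :\: B, B :|: [set x] \notin II]]]).
  by case/existsP => A /existsP[B /and4P[AI BI lt /forall_inP noaug]]; exists A, B.
move=> none; case: nex => A B AI BI lt.
case: (boolP [exists x in A :\: B, B :|: [set x] \in II]) => [/exists_inP //|noaug].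
case/negP: none; apply/existsP; exists A; apply/existsP; exists B.
rewrite AI BI lt; apply/forall_inP => x xD; apply/negP => Bx.
by case/negP: noaug; apply/exists_inP; exists x.
Qed.

(* From a violating pair (A, B), a maximum independent subset I of A ∪ B
   forms a stuck pair with B. *)
Lemma stuck_of_exchange_failure (A B : {set T}) :
  set_system II -> A \in II -> B \in II -> #|B| < #|A| ->
  (forall x, x \in A :\: B -> B :|: [set x] \notin II) ->
  exists I, stuck I B.
Proof.
move=> empty AI BI ltBA noaug.
pose Q K := (K \in II) && (K \subset A :|: B).
have Q0 : Q set0 by rewrite /Q empty sub0set.
case: (arg_maxnP (fun K : {set T} => #|K|) Q0) => I /andP[II_I IS] Imax.
exists I; split=> //.
- split=> [|K]; first by rewrite inE II_I subsetUl.
  rewrite inE => /andP[KI KS]; apply: Imax; rewrite /Q KI.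
  by apply: subset_trans KS _; rewrite subUset IS subsetUr.
- by apply: leq_trans ltBA _; apply: Imax; rewrite /Q AI subsetUl.
- move=> x /setDP[xI xB]; apply: noaug; rewrite inE xB.
  by move: (subsetP IS x xI); rewrite inE (negbTE xB) orbF.
Qed.

(* In a downward-closed system a stuck pair has J \ I nonempty: otherwise
   J ⊊ I and J could be augmented by an element of I \ J. *)
Lemma stuck_diff_nonempty (I J : {set T}) :
  downward_closed II -> stuck I J -> 1 <= #|J :\: I|.
Proof.
move=> dc [max _ ltJI noaug]; rewrite card_gt0; apply/set0Pn.
case: (boolP (J \subset I)) => [JI|/subsetPn[y yJ yI]]; last by exists y; rewrite inE yJ yI.
have /properP[_ [x xI xJ]] : J \proper I by rewrite properEcard JI ltJI.
have : J :|: [set x] \in II.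
  by apply: dc (maximum_in_mem max) _; rewrite subUset JI sub1set.
by rewrite (negbTE (noaug x _)) // inE xJ xI.
Qed.

Lemma stuck_descend (I J K : {set T}) :
  stuck I J -> K \in restrict II (I :|: J) -> #|I| <= #|K| -> stuck K J.
Proof.
move=> [[IR Imax] JI ltJI noaug] KR leIK.
have eqKI : #|K| = #|I| by apply/eqP; rewrite eqn_leq leIK Imax.
move: (KR); rewrite inE => /andP[KI KS].
have KJS : K :|: J \subset I :|: J by rewrite subUset KS subsetUr.
split; rewrite ?eqKI //.
- split=> [|L]; first by rewrite inE KI subsetUl.
  rewrite inE eqKI => /andP[LI LS]; apply: Imax.
  by rewrite inE LI (subset_trans LS KJS).
- move=> x /setDP[xK xJ]; apply: noaug; rewrite inE xJ.
  by move: (subsetP KS x xK); rewrite inE (negbTE xJ) orbF.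
Qed.

Lemma stuck_certificate (I J : {set T}) :
  downward_closed II -> stuck I J -> exists I J, certificate I J.
Proof.
move=> dc; have [n] := ubnP #|I :|: J|; elim: n I J => // n IH I J.
rewrite ltnS => leIJn st.
case: (boolP [forall K in restrict II (I :|: J), (#|I| <= #|K|) ==> (I :\: J \subset K)]).
  move/forall_inP => cover; exists I, J.
  case: (st) => [max JI _ _]; split=> //; first exact: maximum_in_mem max.
    by move=> K KR; apply/implyP/cover.
  exact: stuck_diff_nonempty st.
case/forall_inPn => K KR; rewrite negb_imply => /andP[leIK /subsetPn[y yIJ yK]].
apply: (IH K J); last exact: stuck_descend st KR leIK.
apply: leq_trans leIJn; apply: card_union_drop yIJ yK.
by move: KR; rewrite inE => /andP[].
Qed.

End Certificates.

Theorem mainTheorem3 (T : finType) (II : {set {set T}}) :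
  set_system II -> downward_closed II ->
  (~ is_matroid II <->
   exists I J : {set T}, [/\ I \in II, J \in II,
     (forall K, K \in restrict II (I :|: J) -> #|I| <= #|K| -> I :\: J \subset K),
     1 <= #|J :\: I| &
     (I \in restrict II (I :|: J) /\
      forall K, K \in restrict II (I :|: J) -> #|K| <= #|I|)]).
Proof.
move=> empty dc; split=> [nonmatroid | [I [J cert]] [_ ex]].
  have nex : ~ exchange_axiom II by move=> ex; apply: nonmatroid.
  have [A [B [AI BI ltBA noaug]]] := exchange_failure nex.
  have [I st] := stuck_of_exchange_failure empty AI BI ltBA noaug.
  exact: stuck_certificate dc st.
exact: certificate_not_exchange ex cert.
Qed.
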